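(* Let $B$ be a finite one-generator skew brace and $x\in B$ such that $B=B(x)$. Then the orbit $X$ of $x$ under the subgroup of $\mathrm{Sym}(B)$ generated by $\{\sigma_a,\delta_a: a\in B\}$ is a transitive cycle base of $B$.
   Context: A skew brace is a triple $(B,+,\circ)$ where $(B,+)$ and $(B,\circ)$ are groups and $a\circ(b+c)=a\circ b-a+a\circ c$; $a^-$ is the inverse in $(B,\circ)$. Put $\lambda_a(b):=-a+a\circ b$, $\delta_a(b):=a\circ b-a$, $\sigma_a:=\lambda_{a^-}$ (so the group generated by $\{\sigma_a,\delta_a\}$ equals that generated by $\{\lambda_a,\delta_a\}$). $B(x)$ is the smallest subset containing $x$ that is a subgroup of both $(B,+)$ and $(B,\circ)$; $B$ is one-generator if $B=B(x)$ for some $x$. A transitive cycle base of $B$ is a subset that is a single orbit of the group generated by $\{\lambda_a,\delta_a:a\in B\}$ and generates $(B,+)$. *)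

From mathcomp Require Import all_boot all_fingroup.
Set Implicit Arguments. Unset Strict Implicit. Unset Printing Implicit Defensive.

Record skew_brace (B : Type) := SkewBrace {
  sb_add : B -> B -> B;
  sb_opp : B -> B;
  sb_zero : B;
  sb_circ : B -> B -> B;
  sb_cinv : B -> B;
  sb_one : B;
  sb_addA : associative sb_add;
  sb_add0l : left_id sb_zero sb_add;
  sb_add0r : right_id sb_zero sb_add;
  sb_addNl : forall a, sb_add (sb_opp a) a = sb_zero;
  sb_addNr : forall a, sb_add a (sb_opp a) = sb_zero;
  sb_circA : associative sb_circ;
  sb_circ1l : left_id sb_one sb_circ;
  sb_circ1r : right_id sb_one sb_circ;
  sb_circVl : forall a, sb_circ (sb_cinv a) a = sb_one;
  sb_circVr : forall a, sb_circ a (sb_cinv a) = sb_one;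
  sb_brace : forall a b c,
    sb_circ a (sb_add b c) = sb_add (sb_add (sb_circ a b) (sb_opp a)) (sb_circ a c)
}.

Section SkewBraceDefs.
Variables (B : finType) (S : skew_brace B).
Local Notation "a + b" := (sb_add S a b).
Local Notation "- a" := (sb_opp S a).
Local Notation "a \circ b" := (sb_circ S a b) (at level 40).

Definition sb_lambda (a : B) (b : B) : B := - a + (a \circ b).
Definition sb_delta (a : B) (b : B) : B := (a \circ b) + - a.

Lemma sb_addKl a b : - a + (a + b) = b.
Proof. by rewrite (sb_addA S) (sb_addNl S) (sb_add0l S). Qed.

Lemma sb_addKr a b : (b + - a) + a = b.
Proof. by rewrite -(sb_addA S) (sb_addNl S) (sb_add0r S). Qed.

Lemma sb_circKl a b : (sb_cinv S a) \circ (a \circ b) = b.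
Proof. by rewrite (sb_circA S) (sb_circVl S) (sb_circ1l S). Qed.

Lemma sb_lambda_inj a : injective (sb_lambda a).
Proof.
move=> b c /(congr1 (sb_add S a)); rewrite /sb_lambda (sb_addA S) (sb_addNr S) (sb_add0l S).
rewrite (sb_addA S) (sb_addNr S) (sb_add0l S).
by move/(congr1 (sb_circ S (sb_cinv S a))); rewrite !sb_circKl.
Qed.

Lemma sb_delta_inj a : injective (sb_delta a).
Proof.
move=> b c /(congr1 (fun y => y + a)); rewrite /sb_delta !sb_addKr.
by move/(congr1 (sb_circ S (sb_cinv S a))); rewrite !sb_circKl.
Qed.

Definition lambda_perm (a : B) : {perm B} := perm (@sb_lambda_inj a).
Definition delta_perm (a : B) : {perm B} := perm (@sb_delta_inj a).
Definition sigma_perm (a : B) : {perm B} := lambda_perm (sb_cinv S a).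

Definition lambda_delta_set : {set {perm B}} :=
  [set lambda_perm a | a : B] :|: [set delta_perm a | a : B].
Definition sigma_delta_set : {set {perm B}} :=
  [set sigma_perm a | a : B] :|: [set delta_perm a | a : B].

Definition add_subgroup (Y : {set B}) : bool :=
  [&& sb_zero S \in Y,
      [forall a in Y, forall b in Y, a + b \in Y] &
      [forall a in Y, - a \in Y]].
Definition circ_subgroup (Y : {set B}) : bool :=
  [&& sb_one S \in Y,
      [forall a in Y, forall b in Y, a \circ b \in Y] &
      [forall a in Y, sb_cinv S a \in Y]].

Definition sub_brace_gen (x : B) : {set B} :=
  \bigcap_(Y : {set B} | (x \in Y) && add_subgroup Y && circ_subgroup Y) Y.

Definition add_span (X : {set B}) : {set B} :=
  \bigcap_(Y : {set B} | (X \subset Y) && add_subgroup Y) Y.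

Definition transitive_cycle_base (X : {set B}) : Prop :=
  (exists y : B, X = orbit 'P <<lambda_delta_set>> y) /\ add_span X = [set: B].

End SkewBraceDefs.

From mathcomp Require Import all_boot all_fingroup.

Set Implicit Arguments. Unset Strict Implicit. Unset Printing Implicit Defensive.

(* Let A be the additive span of the orbit X.  Each lambda_c is an additive
   automorphism permuting X, so A is lambda-invariant.  An additive subgroup
   that is lambda-invariant is also a subgroup of (B,o), because
   a o b = a + lambda_a(b) and a^- = -lambda_{a^-}(a).  Hence A is a sub skew
   brace containing x, so A contains B(x) = B.  Since sigma_a = lambda_{a^-},
   the orbit X is also an orbit of <lambda_a, delta_a>. *)

Section SkewBraceLemmas.
Variables (B : finType) (S : skew_brace B).
Local Notation "a + b" := (sb_add S a b).
Local Notation "- a" := (sb_opp S a).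
Local Notation "a \circ b" := (sb_circ S a b) (at level 40).
Local Notation "0" := (sb_zero S).
Local Notation lambda := (sb_lambda S).

Lemma sb_oppK a : - - a = a.
Proof.
by rewrite -[RHS](sb_add0l S) -(sb_addNl S (- a)) -(sb_addA S) (sb_addNl S) (sb_add0r S).
Qed.

Lemma sb_circ0r a : a \circ 0 = a.
Proof.
have := sb_brace S a 0 0; rewrite (sb_add0l S).
move/(congr1 (fun y => - (a \circ 0) + y)).
rewrite (sb_addNl S) -!(sb_addA S) (sb_addA S (- _)) (sb_addNl S) (sb_add0l S).
move/(congr1 (fun y => a + y)).
by rewrite (sb_add0r S) (sb_addA S) (sb_addNr S) (sb_add0l S).
Qed.

Lemma sb_one_zero : sb_one S = 0.
Proof. by rewrite -(sb_circ0r (sb_one S)) (sb_circ1l S). Qed.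

Lemma sb_cinvK a : sb_cinv S (sb_cinv S a) = a.
Proof.
rewrite -[LHS](sb_circ1r S) -(sb_circVl S a) (sb_circA S).
by rewrite (sb_circVl S (sb_cinv S a)) (sb_circ1l S).
Qed.

Lemma lambdaD c b d : lambda c (b + d) = lambda c b + lambda c d.
Proof. by rewrite /sb_lambda (sb_brace S) !(sb_addA S). Qed.

Lemma lambda0 c : lambda c 0 = 0.
Proof. by rewrite /sb_lambda sb_circ0r (sb_addNl S). Qed.

Lemma lambdaN c b : lambda c (- b) = - lambda c b.
Proof.
have := lambdaD c (- b) b; rewrite (sb_addNl S) lambda0.
move/(congr1 (fun y => y + - lambda c b)).
by rewrite (sb_add0l S) -(sb_addA S) (sb_addNr S) (sb_add0r S).
Qed.

Lemma sb_circE a b : a \circ b = a + lambda a b.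
Proof. by rewrite /sb_lambda (sb_addA S) (sb_addNr S) (sb_add0l S). Qed.

Lemma sb_cinvE a : sb_cinv S a = - lambda (sb_cinv S a) a.
Proof. by rewrite /sb_lambda (sb_circVl S) sb_one_zero (sb_add0r S) sb_oppK. Qed.

Lemma add_subgroupP (Y : {set B}) :
  reflect [/\ 0 \in Y, {in Y &, forall a b, a + b \in Y}
            & {in Y, forall a, - a \in Y}]
          (add_subgroup S Y).
Proof.
apply: (iffP and3P) => [[Y0 /'forall_implyP YD /'forall_implyP YN]|[Y0 YD YN]].
  by split=> // a b /YD /'forall_implyP; apply.
split=> //; apply/'forall_implyP => a Ya; last exact: YN.
by apply/'forall_implyP => b; apply: YD.
Qed.

Lemma circ_subgroupP (Y : {set B}) :
  reflect [/\ sb_one S \in Y, {in Y &, forall a b, a \circ b \in Y}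
            & {in Y, forall a, sb_cinv S a \in Y}]
          (circ_subgroup S Y).
Proof.
apply: (iffP and3P) => [[Y1 /'forall_implyP YM /'forall_implyP YV]|[Y1 YM YV]].
  by split=> // a b /YM /'forall_implyP; apply.
split=> //; apply/'forall_implyP => a Ya; last exact: YV.
by apply/'forall_implyP => b; apply: YM.
Qed.

Lemma add_subgroup_preim (f : B -> B) (Y : {set B}) :
  f 0 = 0 -> {morph f : a b / a + b} -> {morph f : a / - a} ->
  add_subgroup S Y -> add_subgroup S (f @^-1: Y).
Proof.
move=> f0 fD fN /add_subgroupP[Y0 YD YN]; apply/add_subgroupP.
split=> [|a b|a]; rewrite !inE ?f0 ?fD ?fN //; [exact: YD | exact: YN].
Qed.

Lemma add_span_sub (X : {set B}) : X \subset add_span S X.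
Proof. by apply/subsetP => y Xy; apply/bigcapP => Y /andP[/subsetP->]. Qed.

Lemma add_span_min (X Y : {set B}) :
  X \subset Y -> add_subgroup S Y -> add_span S X \subset Y.
Proof. by move=> sXY addY; apply: bigcap_inf; rewrite sXY. Qed.

Lemma add_subgroup_span (X : {set B}) : add_subgroup S (add_span S X).
Proof.
apply/add_subgroupP; split=> [|a b|a].
- by apply/bigcapP => Y /andP[_ /add_subgroupP[]].
- move=> /bigcapP Ya /bigcapP Yb; apply/bigcapP => Y SY.
  by have /andP[_ /add_subgroupP[_ YD _]] := SY; apply: YD; [apply: Ya | apply: Yb].
- move=> /bigcapP Ya; apply/bigcapP => Y SY.
  by have /andP[_ /add_subgroupP[_ _ YN]] := SY; apply: YN; apply: Ya.
Qed.

Lemma sub_brace_gen_min (x : B) (Y : {set B}) :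
  x \in Y -> add_subgroup S Y -> circ_subgroup S Y -> sub_brace_gen S x \subset Y.
Proof. by move=> Yx addY circY; apply: bigcap_inf; rewrite Yx addY circY. Qed.

Definition lambda_stable (Y : {set B}) := forall c, {in Y, forall y, lambda c y \in Y}.

Lemma lambda_stable_add_span (X : {set B}) :
  lambda_stable X -> lambda_stable (add_span S X).
Proof.
move=> stX c y Ay.
suff /subsetP/(_ y Ay) : add_span S X \subset lambda c @^-1: add_span S X by rewrite inE.
apply: add_span_min; last by apply: add_subgroup_preim;
  [exact: lambda0 | exact: lambdaD | exact: lambdaN | exact: add_subgroup_span].
by apply/subsetP => z Xz; rewrite inE (subsetP (add_span_sub X)) ?stX.
Qed.

Lemma lambda_stable_circ_subgroup (Y : {set B}) :
  add_subgroup S Y -> lambda_stable Y -> circ_subgroup S Y.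
Proof.
move=> /add_subgroupP[Y0 YD YN] stY; apply/circ_subgroupP.
split=> [|a b Ya Yb|a Ya]; first by rewrite sb_one_zero.
  by rewrite sb_circE YD ?stY.
by rewrite sb_cinvE YN ?stY.
Qed.

Lemma sigma_delta_setE : sigma_delta_set S = lambda_delta_set S.
Proof.
congr (_ :|: _); apply/setP => p.
apply/imsetP/imsetP => [[a _ ->]|[a _ ->]]; first by exists (sb_cinv S a).
by exists (sb_cinv S a); rewrite // /sigma_perm sb_cinvK.
Qed.

Lemma lambda_stable_orbit (x : B) :
  lambda_stable (orbit 'P <<lambda_delta_set S>> x).
Proof.
move=> c y Xy; have -> : lambda c y = aperm y (lambda_perm S c) by rewrite /aperm permE.
rewrite orbit_actr // mem_gen // inE; apply/orP; left; exact: imset_f.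
Qed.

End SkewBraceLemmas.

Theorem mainTheorem19 (B : finType) (S : skew_brace B) (x : B) :
  sub_brace_gen S x = [set: B] ->
  transitive_cycle_base S (orbit 'P <<sigma_delta_set S>> x).
Proof.
rewrite sigma_delta_setE => genB; split; first by exists x.
set X := orbit _ _ x.
have spanX : add_subgroup S (add_span S X) := add_subgroup_span S X.
have stX : lambda_stable S (add_span S X).
  by apply: lambda_stable_add_span; apply: lambda_stable_orbit.
apply/eqP; rewrite eqEsubset subsetT -genB sub_brace_gen_min //.
  by rewrite (subsetP (add_span_sub S X)) ?orbit_refl.
exact: lambda_stable_circ_subgroup.
Qed.
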